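(* Let $\mathcal L$ be a finite language consisting of relation and/or constant symbols, and let $\mathcal H$ be a non-trivial basic hereditary $\mathcal L$-property. Then there are $k\in\mathbb N$ and polynomials $p_1,\dots,p_k$ with rational coefficients such that $|\mathcal H_n|=\sum_{i=1}^k p_i(n)i^n$ for all sufficiently large $n$.
   Context: A hereditary $\mathcal L$-property is a class $\mathcal H$ of $\mathcal L$-structures (finite or infinite) closed under isomorphism and under substructures (a substructure contains the interpretations of all constants). $\mathcal H_n$ is the set of members of $\mathcal H$ with underlying set $[n]$. $\mathcal H$ is trivial if $\mathcal H_n=\emptyset$ for all sufficiently large $n$. For an $\mathcal L$-structure $\mathcal M$ and $a,b\in M$, write $a\sim b$ iff the permutation of $M$ exchanging $a$ and $b$ and fixing all other elements is an automorphism of $\mathcal M$ (equivalently, $ab$ and $ba$ have the same quantifier-free type over $M\setminus\{a,b\}$); this is an equivalence relation. $\mathcal H$ is basic if there is $k\in\mathbb N$ such that every member of $\mathcal H$ has at most $k$ distinct $\sim$-classes. *)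

From HB Require Import structures.
From mathcomp Require Import all_boot all_order all_algebra.
From Stdlib Require Import ClassicalEpsilon.
Set Implicit Arguments. Unset Strict Implicit. Unset Printing Implicit Defensive.

Record lang := Lang {
  rsym : finType;
  ar : rsym -> nat;
  csym : finType }.

Section Structures.
Variable L : lang.

Definition atom (T : Type) := {r : rsym L & (ar r).-tuple T}.

Record struct (T : Type) := Struct {
  rel : atom T -> bool;
  cst : csym L -> T }.

Definition map_atom (T U : Type) (f : T -> U) (a : atom T) : atom U :=
  Tagged (fun r => (ar r).-tuple U) (map_tuple f (tagged a)).

Definition is_iso (T U : Type) (M : struct T) (N : struct U) (f : T -> U) :=
  bijective f /\
  (forall a : atom T, rel N (map_atom f a) = rel M a) /\
  (forall c, cst N c = f (cst M c)).

(* N is the substructure of M induced on the subset P (the existence of the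
   constants of N forces P to contain all interpretations of constants). *)
Definition induced (T : Type) (M : struct T) (P : T -> Prop)
    (N : struct {x : T | P x}) :=
  (forall a, rel N a = rel M (map_atom (@proj1_sig T P) a)) /\
  (forall c, proj1_sig (cst N c) = cst M c).

Definition property := forall T : Type, struct T -> Prop.

Definition hereditary (H : property) :=
  (forall T U (M : struct T) (N : struct U) f,
      H T M -> is_iso M N f -> H U N) /\
  (forall T (M : struct T) (P : T -> Prop) (N : struct {x : T | P x}),
      H T M -> @induced T M P N -> H _ N).

Definition sim (T : Type) (M : struct T) (a b : T) :=
  exists s : T -> T,
    [/\ s a = b, s b = a, (forall x, x <> a -> x <> b -> s x = x)
      & is_iso M M s].

Definition at_most_classes (T : Type) (M : struct T) (k : nat) :=
  exists s : seq T, size s <= k /\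
    forall x, exists y, List.In y s /\ sim M x y.

Definition basic (H : property) :=
  exists k, forall T (M : struct T), H T M -> at_most_classes M k.

(* Finite structures with underlying set [n] = 'I_n, encoded as a finType. *)
Definition fstruct (n : nat) : finType :=
  ({ffun atom 'I_n -> bool} * {ffun csym L -> 'I_n})%type.

Definition of_fstruct n (s : fstruct n) : struct 'I_n :=
  Struct (fun a => s.1 a) (fun c => s.2 c).

Definition asbool (P : Prop) : bool :=
  if excluded_middle_informative P then true else false.

Definition Hcard (H : property) (n : nat) : nat :=
  #|[set s : fstruct n | asbool (H _ (of_fstruct s))]|.

Definition trivial (H : property) :=
  exists N, forall n, N <= n -> forall s : fstruct n, ~ H _ (of_fstruct s).

End Structures.

From Pilot Require Import Defs.
From HB Require Import structures.
From mathcomp Require Import all_boot all_order all_algebra.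
From mathcomp Require Import fingroup perm zify ring.
From Stdlib Require Import ClassicalEpsilon FunctionalExtensionality Classical.
(* Re-import Defs so that [rel] denotes the relation field of a structure,
   not ssrbool's [rel]. *)
Import Pilot.Defs.
Import GRing.Theory Num.Theory.
Set Implicit Arguments. Unset Strict Implicit. Unset Printing Implicit Defensive.

(* A structure in H_n is determined by the colouring of [n] by its ~-classes
   (there are at most k of them) together with its relations.  If a colouring
   is homogeneous (same colour implies ~), the truth value of a relation on a
   tuple only depends on the shape of the tuple: the colours and the equality
   pattern of its entries.  Hence, once every class has at least
   max-arity + 2 elements, only the class sizes capped at that bound matter,
   and structures with different class-size vectors correspond bijectively.
   By heredity, the set of overflow vectors for which a given capped template
   stays in H is a downset of N^j, so by Dickson's lemma the number G(v) of
   structures in H with class-size vector v only depends on v capped at some C.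
   Summing such a function over all colourings of [n], with the weight 1/j!
   accounting for the orderings of the classes, gives a combination of terms
   n^_T * Q^(n-T) with Q <= k, i.e. polynomials times exponentials. *)

Section Isomorphisms.
Variable L : lang.

Lemma map_atom_comp T U V (f : T -> U) (g : U -> V) (a : atom L T) :
  map_atom g (map_atom f a) = map_atom (g \o f) a.
Proof.
case: a => r t; rewrite /map_atom /=; congr (Tagged _ _).
by apply: val_inj; rewrite /= map_comp.
Qed.

Lemma map_atom_ext T U (f g : T -> U) (a : atom L T) :
  f =1 g -> map_atom f a = map_atom g a.
Proof.
move=> fg; case: a => r t; rewrite /map_atom /=; congr (Tagged _ _).
by apply: val_inj; rewrite /=; apply: eq_map.
Qed.

Lemma map_atom_ext_in (T : eqType) U (f g : T -> U) (a : atom L T) :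
  {in tagged a, f =1 g} -> map_atom f a = map_atom g a.
Proof.
case: a => r t /= fg; rewrite /map_atom /=; congr (Tagged _ _).
by apply: val_inj; rewrite /=; apply/eq_in_map.
Qed.

Lemma map_atom_id T (a : atom L T) : map_atom id a = a.
Proof.
case: a => r t; rewrite /map_atom /=; congr (Tagged _ _).
by apply: val_inj; rewrite /= map_id.
Qed.

Lemma is_iso_ext T U (M : struct L T) (N : struct L U) f g :
  f =1 g -> is_iso M N f -> is_iso M N g.
Proof.
move=> fg [bf [hr hc]]; split; first exact: (eq_bij bf fg).
split=> [a|c]; last by rewrite -fg.
by rewrite -(map_atom_ext a fg).
Qed.

Lemma is_iso_comp T U V (M : struct L T) (N : struct L U) (P : struct L V) f g :
  is_iso M N f -> is_iso N P g -> is_iso M P (g \o f).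
Proof.
move=> [bf [hf cf]] [bg [hg cg]]; split; first exact: bij_comp.
split=> [a|c]; last by rewrite cg cf.
by rewrite -map_atom_comp hg hf.
Qed.

Lemma is_iso_id T (M : struct L T) : is_iso M M id.
Proof.
split; first by exists id.
by split=> // a; rewrite map_atom_id.
Qed.

Section Sim.
Variable n : nat.
Implicit Types (M : struct L 'I_n).

Lemma sim_tpermP M x y : sim M x y <-> is_iso M M (tperm x y).
Proof.
split.
  case=> s [sx sy so iso]; apply: is_iso_ext iso => z.
  by case: (tpermP x y z) => [->|->|zx zy] //; rewrite so.
move=> iso; exists (tperm x y); split => //.
- by rewrite tpermL.
- by rewrite tpermR.
- by move=> z zx zy; rewrite tpermD // eq_sym; apply/eqP.
Qed.

Lemma sim_refl M x : sim M x x.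
Proof. by apply/sim_tpermP; rewrite tperm1; apply: is_iso_ext (is_iso_id M) => z; rewrite perm1. Qed.

Lemma sim_sym M x y : sim M x y -> sim M y x.
Proof. by move/sim_tpermP; rewrite tpermC => /sim_tpermP. Qed.

Lemma sim_trans M x y z : sim M x y -> sim M y z -> sim M x z.
Proof.
case: (eqVneq x y) => [<-|nxy] //.
case: (eqVneq y z) => [<-|nyz] //.
case: (eqVneq x z) => [<- _ _|nxz]; first exact: sim_refl.
move=> /sim_tpermP hxy /sim_tpermP hyz; apply/sim_tpermP.
have E : (tperm x y \o tperm y z \o tperm x y) =1 (tperm x z).
  move=> w /=.
  have ne : forall a b : 'I_n, a != b -> b != a by move=> a b; rewrite eq_sym.
  case: (tpermP x y w) => [->|->|wx wy].
  - by rewrite tpermL tpermL tpermD // ne.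
  - by rewrite (tpermD (x:=y)) ?tpermL ?tpermD // ne.
  - case: (tpermP y z w) => [wy'|wz|wy' wz]; first by case: wy.
    + by rewrite wz tpermR tpermR.
    + have h1 : x != w by apply/eqP=> h; apply: wx; rewrite h.
      have h2 : y != w by apply/eqP=> h; apply: wy; rewrite h.
      have h3 : z != w by apply/eqP=> h; apply: wz; rewrite h.
      by rewrite !tpermD.
apply: (is_iso_ext E).
exact: is_iso_comp (is_iso_comp hxy hyz) hxy.
Qed.

End Sim.
End Isomorphisms.

Lemma index_map_in (T U : eqType) (f : T -> U) (t s : seq T) x :
  {in t &, injective f} -> {subset s <= t} -> x \in t ->
  index (f x) (map f s) = index x s.
Proof.
move=> finj; elim: s => [//|y s IH] sub xt /=.
case: (eqVneq y x) => [->|nyx]; first by rewrite eqxx.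
have -> : (f y == f x) = false.
  apply/negbTE/eqP=> e; move/eqP: nyx; apply.
  by apply: finj => //; apply: sub; rewrite inE eqxx.
by rewrite IH // => z zs; apply: sub; rewrite inE zs orbT.
Qed.

Lemma sub_in_count (T : eqType) (P Q : pred T) (t : seq T) :
  {in t, forall z, Q z -> P z} -> count Q t <= count P t.
Proof.
elim: t => [//|y t IH] sub /=.
have h : count Q t <= count P t by apply: IH => w wt; apply: sub; rewrite inE wt orbT.
case Qy: (Q y); last by rewrite add0n; apply: (leq_trans h); apply: leq_addl.
by rewrite (sub y) ?inE ?eqxx // add1n add1n ltnS.
Qed.

Lemma sub_in_count_lt (T : eqType) (P Q : pred T) (t : seq T) :
  {in t, forall z, Q z -> P z} -> (exists2 z, z \in t & P z && ~~ Q z) ->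
  count Q t < count P t.
Proof.
elim: t => [|y t IH] sub [z]; first by [].
rewrite inE => /orP [/eqP ->|zt] /andP [Pz nQz] /=.
- rewrite (negbTE nQz) Pz add0n add1n ltnS.
  by apply: sub_in_count => w wt; apply: sub; rewrite inE wt orbT.
- have h : count Q t < count P t.
    by apply: IH; [move=> w wt; apply: sub; rewrite inE wt orbT| exists z => //; rewrite Pz].
  case Qy: (Q y); last by rewrite add0n; apply: (leq_trans h); apply: leq_addl.
  by rewrite (sub y) ?inE ?eqxx // add1n add1n ltnS.
Qed.

Section Shapes.
Variable L : lang.
Variable j : nat.

Definition atom_of T r (t : (ar r).-tuple T) : atom L T :=
  Tagged (fun r => (ar r).-tuple T) t.

Definition shape n (chi : 'I_n -> 'I_j) (t : seq 'I_n) : seq ('I_j * nat) :=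
  [seq (chi x, index x t) | x <- t].

Lemma size_shape n (chi : 'I_n -> 'I_j) t : size (shape chi t) = size t.
Proof. by rewrite size_map. Qed.

Lemma shape_map n n' (chi : 'I_n -> 'I_j) (chi' : 'I_n' -> 'I_j) (f : 'I_n -> 'I_n') t :
  {in t &, injective f} -> {in t, forall x, chi' (f x) = chi x} ->
  shape chi' (map f t) = shape chi t.
Proof.
move=> finj fchi; rewrite /shape -map_comp; apply/eq_in_map => x xt /=.
by rewrite fchi // (index_map_in finj).
Qed.

Lemma shape_nth n (chi : 'I_n -> 'I_j) t p x0 :
  p < size t -> nth (chi x0, 0) (shape chi t) p = (chi (nth x0 t p), index (nth x0 t p) t).
Proof. by move=> pt; rewrite (nth_map x0). Qed.

Lemma shape_eq_map n n' (chi : 'I_n -> 'I_j) (chi' : 'I_n' -> 'I_j) t t' (x0 : 'I_n') :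
  shape chi t = shape chi' t' ->
  exists f : 'I_n -> 'I_n',
    [/\ map f t = t', {in t &, injective f} & {in t, forall x, chi' (f x) = chi x}].
Proof.
move=> sh.
have eq_size : size t = size t' by rewrite -(size_shape chi) sh size_shape.
have K : forall p, p < size t -> forall y0 : 'I_n,
    chi (nth y0 t p) = chi' (nth x0 t' p) /\ index (nth y0 t p) t = index (nth x0 t' p) t'.
  move=> p pt y0.
  have := congr1 (fun s => nth (chi y0, 0) s p) sh.
  rewrite /= shape_nth // (nth_map x0) -?eq_size // => -[-> ->].
  by split.
exists (fun x => nth x0 t' (index x t)); split.
- apply: (@eq_from_nth _ x0); first by rewrite size_map.
  move=> p; rewrite size_map => pt.
  have y0 : 'I_n by case: (t) pt => [//|y _ _]; exact: y.
  rewrite (nth_map y0) //.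
  have [_ ->] := K p pt y0.
  by rewrite nth_index // mem_nth // -eq_size.
- move=> x y xt yt /= e.
  have px : index x t < size t by rewrite index_mem.
  have py : index y t < size t by rewrite index_mem.
  have [_ Kx] := K _ px x; have [_ Ky] := K _ py x.
  rewrite (nth_index x xt) in Kx; rewrite (nth_index x yt) in Ky.
  rewrite -(nth_index x xt) -(nth_index x yt); congr nth.
  by rewrite Kx Ky e.
- move=> x xt /=.
  have px : index x t < size t by rewrite index_mem.
  have [Kc _] := K _ px x; rewrite (nth_index x xt) in Kc.
  by rewrite Kc.
Qed.

Definition homogeneous n (chi : 'I_n -> 'I_j) (M : struct L 'I_n) :=
  forall x y, chi x = chi y -> sim M x y.

Lemma count_moved_tperm (T : finType) (f : T -> T) (t : seq T) x :
  {in t &, injective f} -> x \in t -> f x != x ->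
  count (fun z => (f \o tperm x (f x)) z != z) (map (tperm x (f x)) t)
    < count (fun z => f z != z) t.
Proof.
move=> finj xt fx; rewrite count_map.
apply: sub_in_count_lt => [z zt|]; last by exists x => //=; rewrite tpermK fx tpermL eqxx.
rewrite /= tpermK; apply: contraNN => /eqP fz.
have xz : x != z by apply/eqP => e; move: fx; rewrite e fz eqxx.
have fxz : f x != z.
  by apply/eqP => e; move: fx; rewrite (finj _ _ xt zt (etrans e (esym fz))) fz eqxx.
by rewrite tpermD // fz.
Qed.

Lemma homogeneous_map_atom n (chi : 'I_n -> 'I_j) (M : struct L 'I_n) : homogeneous chi M ->
  forall (a : atom L 'I_n) (f : 'I_n -> 'I_n),
  {in tagged a &, injective f} -> {in tagged a, forall x, chi (f x) = chi x} ->
  rel M (map_atom f a) = rel M a.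
Proof.
move=> hom a f; move: {2}(count _ _) (leqnn (count (fun x => f x != x) (tagged a))) => k.
elim: k a f => [|k IH] a f hk finj fchi.
  rewrite (map_atom_ext_in (g := id)) ?map_atom_id // => x xa; apply/eqP.
  by apply: contraTT hk => fx; rewrite -ltnNge -has_count; apply/hasP; exists x.
have [/hasP [x xa fx]|/hasPn fixed] := boolP (has (fun x => f x != x) (tagged a)); last first.
  by rewrite (map_atom_ext_in (g := id)) ?map_atom_id // => z /fixed; rewrite negbK => /eqP.
have /sim_tpermP [_ [iso _]] := hom x (f x) (esym (fchi x xa)).
have -> : map_atom f a = map_atom (f \o tperm x (f x)) (map_atom (tperm x (f x)) a).
  by rewrite map_atom_comp; apply: map_atom_ext => z /=; rewrite tpermK.
rewrite -[RHS]iso; apply: IH; case: a hk finj fchi xa fx {iso} => r t /= hk finj fchi xa fx.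
- by rewrite -ltnS; apply: leq_trans hk; apply: count_moved_tperm.
- by move=> _ _ /mapP [z zt ->] /mapP [w wt ->] /=; rewrite !tpermK => /(finj _ _ zt wt) ->.
- move=> _ /mapP [z zt ->] /=; rewrite tpermK fchi //.
  by case: (tpermP x (f x) z) => [->|->|] //; rewrite fchi.
Qed.

Lemma homogeneous_shape n (chi : 'I_n -> 'I_j) (M : struct L 'I_n) : homogeneous chi M ->
  forall r (t t' : (ar r).-tuple 'I_n), shape chi t = shape chi t' ->
  rel M (atom_of t) = rel M (atom_of t').
Proof.
move=> hom r t t' sh.
case E: (val t') => [|x0 s].
  have : val t = val t' by rewrite E; apply/eqP; rewrite -size_eq0 size_tuple -(size_tuple t') E.
  by move/val_inj ->.
have [f [ft finj fchi]] := shape_eq_map x0 sh.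
have -> : atom_of t' = map_atom f (atom_of t).
  by rewrite /map_atom /atom_of /=; congr (Tagged _ _); apply: val_inj => /=.
by rewrite (homogeneous_map_atom hom).
Qed.

Lemma homogeneous_cst n (chi : 'I_n -> 'I_j) (M : struct L 'I_n) : homogeneous chi M ->
  forall c x, chi x = chi (cst M c) -> x = cst M c.
Proof.
move=> hom c x cx; have /sim_tpermP [_ [_ h]] := hom _ _ cx.
by move: (h c); rewrite tpermR.
Qed.

Lemma shape_homogeneous n (chi : 'I_n -> 'I_j) (M : struct L 'I_n) :
  (forall r (t t' : (ar r).-tuple 'I_n), shape chi t = shape chi t' ->
     rel M (atom_of t) = rel M (atom_of t')) ->
  (forall c x, chi x = chi (cst M c) -> x = cst M c) -> homogeneous chi M.
Proof.
move=> hr hc x y cxy; apply/sim_tpermP; split; first by exists (tperm x y); apply: tpermK.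
split.
  case=> r t; rewrite /map_atom /=.
  have := hr r (map_tuple (tperm x y) t) t; rewrite /atom_of => -> //=.
  apply: shape_map; first by move=> u v _ _; apply: perm_inj.
  by move=> z _; case: (tpermP x y z) => [->|->|].
move=> c.
case: (eqVneq x (cst M c)) => [ex|nx].
  have ey := hc c y; rewrite -ex -cxy in ey; rewrite -(ey erefl) -ex.
  by rewrite tperm1 perm1.
case: (eqVneq y (cst M c)) => [ey|ny].
  have ex := hc c x; rewrite -ey cxy in ex; by move: nx; rewrite (ex erefl) ey eqxx.
by rewrite tpermD // eq_sym.
Qed.

End Shapes.

Section ColourClasses.
Variable j : nat.

Definition csize n (chi : 'I_n -> 'I_j) (i : 'I_j) := #|[pred x | chi x == i]|.

Definition csize_seq n (chi : 'I_n -> 'I_j) (t : seq 'I_n) (i : 'I_j) :=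
  size [seq x <- undup t | chi x == i].

Lemma csize_seq_le n (chi : 'I_n -> 'I_j) t i : csize_seq chi t i <= csize chi i.
Proof.
rewrite /csize_seq /csize cardE; apply: uniq_leq_size; first by rewrite filter_uniq ?undup_uniq.
by move=> x; rewrite mem_filter mem_enum inE => /andP [].
Qed.

Lemma csize_seq_size n (chi : 'I_n -> 'I_j) t i : csize_seq chi t i <= size t.
Proof.
rewrite /csize_seq size_filter; exact: leq_trans (count_size _ _) (size_undup _).
Qed.

Lemma shape_realize n n' (chi : 'I_n -> 'I_j) (chi' : 'I_n' -> 'I_j) (t : seq 'I_n) :
  (forall i, csize_seq chi t i <= csize chi' i) ->
  exists t' : seq 'I_n', shape chi' t' = shape chi t.
Proof.
case: t => [|p t0] hcl; first by exists [::].
set t := p :: t0.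
have [x0 _] : exists x0 : 'I_n', chi' x0 == chi p.
  have : 0 < csize chi' (chi p).
    apply: leq_trans (hcl (chi p)); rewrite /csize_seq lt0n size_eq0.
    apply/eqP => /(congr1 (fun s => p \in s)); rewrite mem_filter eqxx mem_undup inE eqxx.
    by [].
  by rewrite /csize lt0n => /existsP[x hx]; exists x.
pose f (x : 'I_n) := nth x0 (enum [pred y | chi' y == chi x])
   (index x [seq z <- undup t | chi z == chi x]).
have hf : forall x, x \in t ->
    index x [seq z <- undup t | chi z == chi x] < size (enum [pred y | chi' y == chi x]).
  move=> x xt; rewrite -cardE; apply: leq_trans (hcl (chi x)).
  by rewrite /csize_seq index_mem mem_filter eqxx mem_undup.
have fchi : {in t, forall x, chi' (f x) = chi x}.
  move=> x xt; apply/eqP.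
  by have := mem_nth x0 (hf x xt); rewrite mem_enum inE.
exists (map f t); apply: shape_map => // x y xt yt e.
have cxy : chi x = chi y by rewrite -fchi // e fchi.
have hx := hf x xt; have hy := hf y yt; rewrite cxy in hx.
move/eqP: e; rewrite /f cxy nth_uniq ?enum_uniq // => /eqP e.
  have xt' : x \in [seq z <- undup t | chi z == chi y] by rewrite mem_filter cxy eqxx mem_undup.
  have yt' : y \in [seq z <- undup t | chi z == chi y] by rewrite mem_filter eqxx mem_undup.
  by rewrite -(nth_index x xt') e nth_index.
Qed.

Lemma shape_swap n n' (chi : 'I_n -> 'I_j) (chi' : 'I_n' -> 'I_j) t t' x y x' y' :
  shape chi (t ++ [:: x; y]) = shape chi' (t' ++ [:: x'; y']) ->
  shape chi (map (tperm x y) t) = shape chi' (map (tperm x' y') t').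
Proof.
move=> sh; have [f [E finj fchi]] := shape_eq_map x' sh.
have eq_size : size t = size t'.
  by have := congr1 size sh; rewrite !size_shape !size_cat /= !addn2 => -[].
have Et : map f t = t'.
  by have := congr1 (take (size t)) E; rewrite map_cat !take_size_cat ?size_map.
have Exy : [:: f x; f y] = [:: x'; y'].
  by have := congr1 (drop (size t)) E; rewrite map_cat !drop_size_cat ?size_map.
case: Exy => fx fy.
have inu : forall z, z \in t ++ [:: x; y] -> tperm x y z \in t ++ [:: x; y].
  move=> z zu; case: (tpermP x y z) => [_|_|_ _ //]; by rewrite mem_cat !inE eqxx !orbT.
rewrite -Et -map_comp.
have -> : map (tperm x' y' \o f) t = map (f \o tperm x y) t.
  apply/eq_in_map => z zt /=.
  have zu : z \in t ++ [:: x; y] by rewrite mem_cat zt.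
  have xu : x \in t ++ [:: x; y] by rewrite mem_cat !inE eqxx orbT.
  have yu : y \in t ++ [:: x; y] by rewrite mem_cat !inE eqxx !orbT.
  case: (tpermP x y z) => [->|->|zx zy]; first by rewrite fx tpermL.
    by rewrite fy tpermR.
  rewrite tpermD //.
    by apply/eqP => h; apply: zx; apply: finj => //; rewrite fx h.
  by apply/eqP => h; apply: zy; apply: finj => //; rewrite fy h.
rewrite map_comp; symmetry; apply: shape_map.
- move=> u v /mapP [a at' ->] /mapP [b bt ->]; apply: finj; apply: inu; by rewrite mem_cat ?at' ?bt.
- by move=> u /mapP [a at' ->]; rewrite fchi //; apply: inu; rewrite mem_cat at'.
Qed.

End ColourClasses.

Lemma asboolP (P : Prop) : reflect P (asbool P).
Proof. rewrite /asbool; case: excluded_middle_informative => h; by constructor. Qed.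

Lemma asbool_iff (P Q : Prop) : (P <-> Q) -> asbool P = asbool Q.
Proof. by move=> [pq qp]; apply/asboolP/asboolP. Qed.

Section Correspondence.
Variable L : lang.
Variable j : nat.

Definition max_arity := \max_(x : rsym L) @ar L x.
(* Room for a tuple of maximal arity and the two points of a transposition,
   see [corresp_tperm_rel]. *)
Definition cap_bound := (max_arity + 2)%N.

Lemma ar_le_max (r0 : rsym L) : ar r0 <= max_arity.
Proof. exact: (leq_bigmax (F := @ar L)). Qed.

Local Notation M := (@of_fstruct L _).

Definition cap_eq n n' (chi : 'I_n -> 'I_j) (chi' : 'I_n' -> 'I_j) :=
  forall i, minn (csize chi i) cap_bound = minn (csize chi' i) cap_bound.

Definition corresp n n' (chi : 'I_n -> 'I_j) (chi' : 'I_n' -> 'I_j)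
    (s : fstruct L n) (s' : fstruct L n') :=
  (forall r0 (t : (ar r0).-tuple 'I_n) (t' : (ar r0).-tuple 'I_n'),
      shape chi t = shape chi' t' -> s.1 (atom_of t) = s'.1 (atom_of t')) /\
  (forall c, chi (s.2 c) = chi' (s'.2 c)).

Lemma cap_eq_sym n n' (chi : 'I_n -> 'I_j) (chi' : 'I_n' -> 'I_j) :
  cap_eq chi chi' -> cap_eq chi' chi.
Proof. by move=> h i. Qed.

Lemma corresp_sym n n' (chi : 'I_n -> 'I_j) (chi' : 'I_n' -> 'I_j) s s' :
  corresp chi chi' s s' -> corresp chi' chi s' s.
Proof.
by move=> [h1 h2]; split=> [r0 t t' e|c]; [rewrite (h1 _ t' t) | rewrite h2].
Qed.

Lemma shape_realize_cap n n' (chi : 'I_n -> 'I_j) (chi' : 'I_n' -> 'I_j) (t : seq 'I_n) :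
  cap_eq chi chi' -> size t <= cap_bound -> exists t' : seq 'I_n', shape chi' t' = shape chi t.
Proof.
move=> ce st; apply: shape_realize => i.
have h1 := csize_seq_le chi t i; have h2 := csize_seq_size chi t i; have h3 := ce i.
lia.
Qed.

Lemma tuple_realize_cap n n' (chi : 'I_n -> 'I_j) (chi' : 'I_n' -> 'I_j)
    (r0 : rsym L) (t : (ar r0).-tuple 'I_n) :
  cap_eq chi chi' -> exists t' : (ar r0).-tuple 'I_n', shape chi' t' = shape chi t.
Proof.
move=> ce.
have st : size t <= cap_bound by rewrite size_tuple /cap_bound; have := ar_le_max r0; lia.
have [t' e] := shape_realize_cap ce st.
have sz' : size t' == ar r0.
  by have := congr1 size e; rewrite !size_shape size_tuple => ->.
by exists (Tuple sz').
Qed.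

Lemma csize1_eq n (chi : 'I_n -> 'I_j) i x y :
  csize chi i = 1 -> chi x = i -> chi y = i -> x = y.
Proof.
move=> h hx hy; have : csize chi i <= 1 by rewrite h.
move/card_le1_eqP; apply; by rewrite inE; apply/eqP.
Qed.

Lemma homogeneous_csize_cst n (chi : 'I_n -> 'I_j) (s : fstruct L n) c :
  homogeneous chi (M s) -> csize chi (chi (s.2 c)) = 1.
Proof.
move=> hom; apply/eqP; rewrite eqn_leq; apply/andP; split.
  apply/card_le1_eqP => x y; rewrite !inE => /eqP hx /eqP hy.
  by rewrite (homogeneous_cst hom hx) (homogeneous_cst hom hy).
by apply/card_gt0P; exists (s.2 c); rewrite inE.
Qed.

Lemma cap_eq_csize1 n n' (chi : 'I_n -> 'I_j) (chi' : 'I_n' -> 'I_j) i :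
  cap_eq chi chi' -> csize chi i = 1 -> csize chi' i = 1.
Proof. move=> /(_ i) ce h; rewrite h /cap_bound in ce; lia. Qed.

Lemma cap_eq_csize_gt0 n n' (chi : 'I_n -> 'I_j) (chi' : 'I_n' -> 'I_j) i :
  cap_eq chi chi' -> 0 < csize chi i -> 0 < csize chi' i.
Proof. move=> /(_ i) ce h; rewrite /cap_bound in ce; lia. Qed.

Lemma corresp_exists n n' (chi : 'I_n -> 'I_j) (chi' : 'I_n' -> 'I_j) (s : fstruct L n) :
  cap_eq chi chi' -> homogeneous chi (M s) ->
  exists s' : fstruct L n', homogeneous chi' (M s') /\ corresp chi chi' s s'.
Proof.
move=> ce hom.
have [f hf] : exists f : csym L -> 'I_n', forall c, chi' (f c) = chi (s.2 c).
  suff h : forall c, exists x : 'I_n', chi' x = chi (s.2 c).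
    by have [f hf] := fin_all_exists h; exists f.
  move=> c; have : 0 < csize chi' (chi (s.2 c)).
    by apply: cap_eq_csize_gt0 ce _; rewrite homogeneous_csize_cst.
  by move/card_gt0P => [x]; rewrite inE => /eqP hx; exists x.
pose rl := [ffun a : atom L 'I_n' => asbool (exists t : (ar (tag a)).-tuple 'I_n,
               shape chi t = shape chi' (tagged a) /\ s.1 (atom_of t))].
exists (rl, [ffun c => f c]).
have key : forall r0 (t : (ar r0).-tuple 'I_n) (t' : (ar r0).-tuple 'I_n'),
    shape chi t = shape chi' t' -> s.1 (atom_of t) = rl (atom_of t').
  move=> r0 t t' e; rewrite ffunE /=.
  apply/idP/asboolP => [h|[t0 [e0 h0]]]; first by exists t.
  have e1 : shape chi t0 = shape chi t by rewrite e0 e.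
  by have := homogeneous_shape hom e1; rewrite /= => <-.
split.
  apply: shape_homogeneous => [r0 t t' e|c x] /=.
    rewrite !ffunE /=; apply: asbool_iff.
    by split=> -[t0 [e0 h0]]; exists t0; rewrite e0 ?e; split.
  rewrite ffunE hf => hx.
  apply: (csize1_eq (chi := chi') (i := chi (s.2 c))) => //.
  by apply: cap_eq_csize1 ce _; rewrite homogeneous_csize_cst.
by split=> [r0 t t' e|c] /=; [exact: key | rewrite ffunE hf].
Qed.

Lemma corresp_unique n n' (chi : 'I_n -> 'I_j) (chi' : 'I_n' -> 'I_j) (s : fstruct L n)
    (s1 s2 : fstruct L n') :
  cap_eq chi chi' -> homogeneous chi' (M s1) -> homogeneous chi' (M s2) ->
  corresp chi chi' s s1 -> corresp chi chi' s s2 -> s1 = s2.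
Proof.
move=> ce hom1 hom2 [h1 c1] [h2 c2].
case: s1 hom1 h1 c1 => r1 k1 hom1 h1 c1; case: s2 hom2 h2 c2 => r2 k2 hom2 h2 c2.
congr pair; apply/ffunP.
  case=> r0 t' /=.
  have [t e] := tuple_realize_cap t' (cap_eq_sym ce).
  by have := h1 r0 t t' e; have := h2 r0 t t' e; rewrite /atom_of /= => <- <-.
move=> c; have := c1 c; rewrite c2 => e.
by have := homogeneous_cst hom1 (c:=c) (x:=k2 c); rewrite /= => -> //; rewrite -e.
Qed.

Lemma corresp_trans n n' nt (chi : 'I_n -> 'I_j) (chi' : 'I_n' -> 'I_j) (chit : 'I_nt -> 'I_j)
   s s' (tau : fstruct L nt) :
  cap_eq chi chit -> corresp chi chit s tau -> corresp chi' chit s' tau -> corresp chi chi' s s'.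
Proof.
move=> ce [h1 c1] [h2 c2]; split=> [r0 t t' e|c]; last by rewrite c1 c2.
have [tt et] := tuple_realize_cap t ce.
by rewrite (h1 r0 t tt) // (h2 r0 t' tt) // -e.
Qed.

End Correspondence.

Section Separation.
Variable L : lang.
Variable j : nat.
Local Notation M := (@of_fstruct L _).

Definition separating n (chi : 'I_n -> 'I_j) (s : fstruct L n) :=
  forall x y, sim (M s) x y -> chi x = chi y.

Section TransposedPair.
Variables (n n' : nat) (chi : 'I_n -> 'I_j) (chi' : 'I_n' -> 'I_j).
Variables (s : fstruct L n) (s' : fstruct L n').
Hypotheses (ce : cap_eq L chi chi') (hom' : homogeneous chi' (M s')).
Hypothesis cor : corresp chi chi' s s'.
Variables (x y : 'I_n) (x' y' : 'I_n').
Hypotheses (cx : chi x = chi' x') (cy : chi y = chi' y') (sxy : sim (M s') x' y').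

Lemma corresp_tperm_rel r0 (t : (ar r0).-tuple 'I_n) :
  s.1 (atom_of (map_tuple (tperm x y) t)) = s.1 (atom_of t).
Proof.
have [w' ew] : exists w' : seq 'I_n', shape chi' w' = shape chi (val t ++ [:: x; y]).
  apply: shape_realize_cap ce _; rewrite size_cat size_tuple /cap_bound /=.
  have := ar_le_max r0; lia.
have [f [Ef finj fchi]] := shape_eq_map x' (esym ew).
have sub : {subset val t <= val t ++ [:: x; y]} by move=> z zt; rewrite mem_cat zt.
have e1 : shape chi t = shape chi' (map_tuple f t).
  rewrite /= (shape_map (chi := chi)) // => [u v uy vy|u uy]; first by apply: finj; apply: sub.
  by rewrite fchi //; apply: sub.
have e2 : shape chi (map_tuple (tperm x y) t) =
          shape chi' (map_tuple (tperm (f x) (f y)) (map_tuple f t)).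
  apply: shape_swap.
  have -> : val (map_tuple f t) ++ [:: f x; f y] = w' by rewrite -Ef map_cat.
  by rewrite ew.
rewrite (cor.1 r0 _ _ e1) (cor.1 r0 _ _ e2).
have xu : x \in val t ++ [:: x; y] by rewrite mem_cat !inE eqxx orbT.
have yu : y \in val t ++ [:: x; y] by rewrite mem_cat !inE eqxx !orbT.
have /sim_tpermP [_ [h _]] : sim (M s') (f x) (f y).
  apply: (sim_trans (y := x')); first by apply: hom'; rewrite fchi // cx.
  by apply: (sim_trans sxy); apply: hom'; rewrite fchi // cy.
exact: (h (atom_of (map_tuple f t))).
Qed.

Lemma corresp_tperm_cst c : chi' x' != chi' y' -> s.2 c = tperm x y (s.2 c).
Proof.
move=> nc; have /sim_tpermP [_ [_ /(_ c) /= hc]] := sxy.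
have cst_eq z z' : z = s.2 c -> chi z = chi' z' -> z' = s'.2 c.
  by move=> -> e; apply: (homogeneous_cst hom'); rewrite /= -e cor.2.
case: (eqVneq x (s.2 c)) => [ex|nx].
  by move: nc hc; rewrite -(cst_eq _ _ ex cx) tpermL => /negP nc ey; case: nc; rewrite -ey.
case: (eqVneq y (s.2 c)) => [ey|ny].
  by move: nc hc; rewrite -(cst_eq _ _ ey cy) tpermR => /negP nc ex; case: nc; rewrite ex.
by rewrite tpermD // eq_sym.
Qed.

Lemma corresp_sim_tperm : chi' x' != chi' y' -> sim (M s) x y.
Proof.
move=> nc; apply/sim_tpermP; split; first by exists (tperm x y); apply: tpermK.
by split=> [[r0 t]|c]; [exact: corresp_tperm_rel | exact: corresp_tperm_cst].
Qed.

End TransposedPair.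

Lemma corresp_separating n n' (chi : 'I_n -> 'I_j) (chi' : 'I_n' -> 'I_j) s s' :
  cap_eq L chi chi' -> homogeneous chi' (M s') -> corresp chi chi' s s' ->
  separating chi s -> separating chi' s'.
Proof.
move=> ce hom' cor sep x' y' sxy; apply/eqP; apply: contraT => nc.
have [u eu] : exists u : seq 'I_n, shape chi u = shape chi' [:: x'; y'].
  by apply: shape_realize_cap (cap_eq_sym ce) _; rewrite /cap_bound /=; lia.
case: u eu => [|x [|y [|? ?]]] eu; try by have := congr1 size eu.
move: eu; rewrite /shape /= => -[cx _ cy _].
have sxy0 := corresp_sim_tperm ce hom' cor cx cy sxy nc.
by move: nc; rewrite -cx -cy (sep x y sxy0) eqxx.
Qed.

End Separation.

Section Heredity.
Variable L : lang.
Variable j : nat.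
Variable H : property L.
Variable hH : hereditary H.
Local Notation M := (@of_fstruct L _).

Lemma csize_le_inj n n' (chi : 'I_n -> 'I_j) (chi' : 'I_n' -> 'I_j) :
  (forall i, csize chi i <= csize chi' i) ->
  exists g : 'I_n -> 'I_n', injective g /\ forall x, chi' (g x) = chi x.
Proof.
move=> le.
case: n chi le => [|n] chi le.
  have g : 'I_0 -> 'I_n' by case=> m; rewrite ltn0.
  by exists g; split; case.
have [t' e] : exists t' : seq 'I_n', shape chi' t' = shape chi (enum 'I_n.+1).
  by apply: shape_realize => i; apply: leq_trans (le i); apply: csize_seq_le.
have [x0 _] : exists x0 : 'I_n', chi' x0 == chi ord0.
  have : 0 < csize chi' (chi ord0).
    by apply: leq_trans (le _); apply/card_gt0P; exists ord0; rewrite inE.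
  by move/card_gt0P => [x]; rewrite inE => hx; exists x.
have [g [_ ginj gchi]] := shape_eq_map x0 (esym e).
exists g; split; first by move=> x y; apply: ginj; rewrite mem_enum.
by move=> x; apply: gchi; rewrite mem_enum.
Qed.

Lemma hereditary_embedding n n' (s : fstruct L n) (s' : fstruct L n') (g : 'I_n -> 'I_n') :
  injective g -> (forall a, s'.1 (map_atom g a) = s.1 a) -> (forall c, g (s.2 c) = s'.2 c) ->
  H (M s') -> H (M s).
Proof.
move=> ginj grel gc Hs'.
pose Pb (y : 'I_n') := [exists x, g x == y].
have Pc c : Pb (s'.2 c) by apply/existsP; exists (s.2 c); rewrite gc.
pose N := Struct (fun a : atom L {y | Pb y} => s'.1 (map_atom val a))
                 (fun c => exist (fun y => Pb y) (s'.2 c) (Pc c)).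
have HN : H N by apply: (hH.2 _ (M s') (fun y => Pb y) N Hs'); split.
have exP (y : {y | Pb y}) : exists x, g x == val y by case: y => y /= /existsP.
pose h (y : {y | Pb y}) := xchoose (exP y).
have gh y : g (h y) = val y by have /eqP := xchooseP (exP y).
have Pg x : Pb (g x) by apply/existsP; exists x.
pose k x := exist (fun y => Pb y) (g x) (Pg x).
have hk : cancel h k by move=> y; apply: val_inj; rewrite /= gh.
apply: (hH.1 _ _ N (M s) h HN); split; first by exists k => // x; apply: ginj; rewrite gh.
split=> [a|c] /=; last by apply: ginj; rewrite gh gc.
by rewrite -grel map_atom_comp; congr (s'.1 _); apply: map_atom_ext => y /=; rewrite gh.
Qed.

Lemma corresp_hereditary n n' (chi : 'I_n -> 'I_j) (chi' : 'I_n' -> 'I_j)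
    (s : fstruct L n) (s' : fstruct L n') :
  (forall i, csize chi i <= csize chi' i) ->
  homogeneous chi' (M s') -> corresp chi chi' s s' -> H (M s') -> H (M s).
Proof.
move=> le hom' [hc cc]; have [g [ginj gchi]] := csize_le_inj le.
apply: (hereditary_embedding ginj) => [[r0 t]|c].
  by apply: esym; apply: hc; apply: esym; apply: shape_map => // u v _ _; exact: ginj.
apply: (csize1_eq (chi := chi') (i := chi' (s'.2 c))) => //; first by rewrite homogeneous_csize_cst.
by rewrite gchi cc.
Qed.

End Heredity.

Lemma ex_tail_min (a : nat -> nat) k : exists l, k <= l /\ forall l', k <= l' -> a l <= a l'.
Proof.
have ex : exists v, asbool (exists l, k <= l /\ a l = v) by exists (a k); apply/asboolP; exists k.
case: (ex_minnP ex) => v /asboolP [l [kl av]] vmin.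
exists l; split => // l' kl'; rewrite av; apply: vmin; apply/asboolP; by exists l'.
Qed.

Lemma ex_nondecr_subseq (a : nat -> nat) :
  exists phi : nat -> nat, (forall k, phi k < phi k.+1) /\ (forall k, a (phi k) <= a (phi k.+1)).
Proof.
have [am ham] : exists am : nat -> nat, forall k, k <= am k /\ forall l', k <= l' -> a (am k) <= a l'.
  exists (fun k => epsilon (inhabits 0) (fun l => k <= l /\ forall l', k <= l' -> a l <= a l')).
  by move=> k; exact: (epsilon_spec _ _ (ex_tail_min a k)).
pose fix phi k := if k is k'.+1 then am (phi k').+1 else am 0.
exists phi; split => k /=.
  by have [h _] := ham (phi k).+1.
have [h1 _] := ham (phi k).+1.
have [T [eT hT]] : exists T, phi k = am T /\ T <= phi k.
  case: (k) => [|k']; [exists 0 | exists (phi k').+1]; split => //.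
  by have [] := ham (phi k').+1.
rewrite {1}eT; have [_ h3] := ham T; apply: h3; lia.
Qed.

Section Dickson.
Variable j : nat.
Definition vle (u v : 'I_j -> nat) := forall i, u i <= v i.

Lemma ex_nondecr_coords (cs : seq 'I_j) (U : nat -> 'I_j -> nat) :
  exists phi : nat -> nat, (forall k, phi k < phi k.+1) /\
     (forall c, c \in cs -> forall k, U (phi k) c <= U (phi k.+1) c).
Proof.
elim: cs => [|c cs [phi [hinc hmon]]].
  by exists id; split.
have [psi [pinc pmon]] := ex_nondecr_subseq (fun k => U (phi k) c).
exists (phi \o psi); split => [k|c'] /=.
  exact: (homo_ltn (f := phi) (r := fun a b => a < b) ltn_trans hinc (pinc k)).
rewrite inE => /orP [/eqP ->|c'cs] k; first exact: pmon.
have hm := homo_leq (f := fun k => U (phi k) c') (r := leq) leqnn leq_trans (hmon c' c'cs).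
by apply: hm; apply: ltnW.
Qed.

Lemma ex_vle_pair (U : nat -> 'I_j -> nat) : exists k l, k < l /\ vle (U k) (U l).
Proof.
have [phi [hinc hmon]] := ex_nondecr_coords (enum 'I_j) U.
by exists (phi 0), (phi 1); split => // i; apply: hmon; rewrite mem_enum.
Qed.

Definition downset (D : ('I_j -> nat) -> Prop) := forall u v, vle u v -> D v -> D u.

Definition capv (B : nat) (u : 'I_j -> nat) := fun i => minn (u i) B.

Lemma downset_basis (D : ('I_j -> nat) -> Prop) : downset D ->
  exists (m : nat) (F : nat -> 'I_j -> nat),
    (forall k, k < m -> ~ D (F k)) /\ (forall u, ~ D u -> exists2 k, k < m & vle (F k) u).
Proof.
move=> dD.
pose P (l : seq ('I_j -> nat)) :=
  exists u, ~ D u /\ forall k, k < size l -> ~ vle (nth (fun _ => 0) l k) u.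
pose ch (l : seq ('I_j -> nat)) := epsilon (inhabits (fun _ => 0))
   (fun u => ~ D u /\ forall k, k < size l -> ~ vle (nth (fun _ => 0) l k) u).
have chP : forall l, P l -> ~ D (ch l) /\ forall k, k < size l -> ~ vle (nth (fun _ => 0) l k) (ch l).
  by move=> l pl; exact: (epsilon_spec _ _ pl).
pose fix lst m := if m is m'.+1 then rcons (lst m') (ch (lst m')) else [::].
have szl : forall m, size (lst m) = m by elim=> //= m ih; rewrite size_rcons ih.
have nthl : forall m k, k < m -> nth (fun _ => 0) (lst m) k = ch (lst k).
  elim=> // m ih k; rewrite ltnS leq_eqVlt => /orP [/eqP ->|km] /=.
    by rewrite nth_rcons szl ltnn eqxx.
  by rewrite nth_rcons szl km ih.
have [m nPm] : exists m, ~ P (lst m).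
  apply: NNPP => hall.
  have allP : forall m, P (lst m) by move=> m; apply: NNPP => h; apply: hall; exists m.
  have [k [l [kl hv]]] := ex_vle_pair (fun m => ch (lst m)).
  have [_ h] := chP _ (allP l).
  by apply: (h k); rewrite ?szl // nthl.
have ex : exists m, asbool (~ P (lst m)) by exists m; apply/asboolP.
case: (ex_minnP ex) => m0 /asboolP nP0 min0.
exists m0, (fun k => ch (lst k)); split.
  move=> k km; have : P (lst k).
    apply: NNPP => h; have := min0 k (introT (asboolP _) h); lia.
  by move/chP => [].
move=> u nDu; apply: NNPP => hn; apply: nP0; exists u; split => // k.
by rewrite szl => km hv; apply: hn; exists k => //; rewrite -(nthl m0).
Qed.

Lemma downset_capped (D : ('I_j -> nat) -> Prop) : downset D ->
  exists B, forall u, D u <-> D (capv B u).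
Proof.
move=> dD; have [m [F [FU Fgen]]] := downset_basis dD.
exists (\max_(k < m) \max_(i : 'I_j) F k i) => u; split.
  by apply: dD => i; rewrite /capv geq_minl.
move=> hc; apply: NNPP => hu.
have [k km hv] := Fgen u hu.
apply: (FU k km); apply: dD hc => i; rewrite /capv leq_min hv.
apply: leq_trans (leq_bigmax (F := fun k : 'I_m => \max_(i : 'I_j) F k i) (Ordinal km)).
exact: (leq_bigmax (F := fun i => F k i)).
Qed.

End Dickson.

Lemma ffact_expn_step n T Q :
  Q * (n ^_ T * Q ^ (n - T)) + T * (n ^_ T.-1 * Q ^ (n - T.-1)) = n.+1 ^_ T * Q ^ (n.+1 - T).
Proof.
case: T => [|T] /=; first by rewrite !ffactn0 !subn0 mul0n addn0 expnS; lia.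
rewrite ffactSS subSS.
case: (ltngtP n T) => [nT|Tn|<-].
- by rewrite !ffact_small //; lia.
- have e : n - T = (n - T.+1).+1 by lia.
  rewrite ffactnSr e expnS; nia.
- by rewrite (ffact_small (ltnSn n)) subnn !expn0; lia.
Qed.

Section PrescribedColourings.
Variable j : nat.

Definition fits (o : option nat) (t : nat) := if o is Some b then t == b else true.
Definition ncolourings (th : 'I_j -> option nat) n :=
  \sum_(chi : {ffun 'I_n -> 'I_j}) [forall i, fits (th i) (csize chi i)].
Definition spec_fact (th : 'I_j -> option nat) := \prod_(i < j) (if th i is Some t then t`! else 1).
Definition spec_total (th : 'I_j -> option nat) := \sum_(i < j) (if th i is Some t then t else 0).
Definition spec_free (th : 'I_j -> option nat) := \sum_(i < j) (th i == None).

Lemma csizeE n (chi : 'I_n -> 'I_j) i : csize chi i = \sum_(x < n) (chi x == i).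
Proof. by rewrite /csize -sum1_card big_mkcond. Qed.

Definition ext_colouring n (chi : {ffun 'I_n -> 'I_j}) (v : 'I_j) : {ffun 'I_n.+1 -> 'I_j} :=
  [ffun x => if unlift ord0 x is Some y then chi y else v].

Lemma csize_ext n (chi : {ffun 'I_n -> 'I_j}) v i :
  csize (ext_colouring chi v) i = (v == i) + csize chi i.
Proof.
rewrite !csizeE big_ord_recl /ext_colouring ffunE unlift_none; congr (_ + _).
by apply: eq_bigr => x _; rewrite ffunE liftK.
Qed.

Lemma sum_ffunS n (F : {ffun 'I_n.+1 -> 'I_j} -> nat) :
  \sum_(chi : {ffun 'I_n.+1 -> 'I_j}) F chi =
  \sum_(v : 'I_j) \sum_(chi : {ffun 'I_n -> 'I_j}) F (ext_colouring chi v).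
Proof.
rewrite pair_bigA /= (reindex (fun p : 'I_j * {ffun 'I_n -> 'I_j} => ext_colouring p.2 p.1)) //.
exists (fun chi : {ffun 'I_n.+1 -> 'I_j} => (chi ord0, [ffun y : 'I_n => chi (lift ord0 y)]))
  => [[v chi] _|chi _] /=.
  congr pair; first by rewrite /ext_colouring ffunE unlift_none.
  by apply/ffunP => y; rewrite !ffunE liftK.
apply/ffunP => x; rewrite /ext_colouring !ffunE.
by case: unliftP => [y ->|->]; rewrite ?ffunE.
Qed.

Definition spec_set (th : 'I_j -> option nat) v o := fun i => if i == v then o else th i.

Lemma ncolourings_ext n th v :
  \sum_(chi : {ffun 'I_n -> 'I_j}) [forall i, fits (th i) (csize (ext_colouring chi v) i)] =
  if th v is Some t then (if t is t'.+1 then ncolourings (spec_set th v (Some t')) n else 0)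
  else ncolourings th n.
Proof.
case E: (th v) => [[|t']|].
- rewrite big1 // => chi _.
  by case: forallP => [/(_ v)|//]; rewrite E /= csize_ext eqxx add1n.
- apply: eq_bigr => chi _; congr (nat_of_bool _); apply: eq_forallb => i.
  rewrite /spec_set csize_ext; case: (eqVneq i v) => [->|niv]; first by rewrite E /= add1n eqSS.
  by rewrite add0n.
- apply: eq_bigr => chi _; congr (nat_of_bool _); apply: eq_forallb => i.
  rewrite csize_ext; case: (eqVneq i v) => [->|niv]; first by rewrite E.
  by rewrite add0n.
Qed.

Lemma spec_fact_set th v t :
  th v = Some t.+1 -> spec_fact th = t.+1 * spec_fact (spec_set th v (Some t)).
Proof.
move=> E; rewrite /spec_fact (bigD1 v) //= [in RHS](bigD1 v) //= E /spec_set eqxx factS mulnA.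
congr (_ * _); apply: eq_bigr => i niv; by rewrite (negbTE niv).
Qed.

Lemma spec_total_set th v t :
  th v = Some t.+1 -> spec_total th = (spec_total (spec_set th v (Some t))).+1.
Proof.
move=> E; rewrite /spec_total (bigD1 v) //= [in RHS](bigD1 v) //= E /spec_set eqxx addSn.
congr (_ + _).+1; apply: eq_bigr => i niv; by rewrite (negbTE niv).
Qed.

Lemma spec_free_set th v t : th v = Some t.+1 -> spec_free (spec_set th v (Some t)) = spec_free th.
Proof.
move=> E; apply: eq_bigr => i _; rewrite /spec_set.
by case: (eqVneq i v) => [->|]; rewrite ?E.
Qed.

Lemma ncolourings0E th : ncolourings th 0 * spec_fact th = 0 ^_ (spec_total th).
Proof.
have -> : ncolourings th 0 = [forall i, fits (th i) 0].
  rewrite /ncolourings (eq_bigr (fun _ => nat_of_bool [forall i, fits (th i) 0])); last first.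
    by move=> chi _; congr (nat_of_bool _); apply: eq_forallb => i; rewrite csizeE big_ord0.
  by rewrite sum_nat_const card_ffun !card_ord expn0 mul1n.
case: forallP => h.
  have -> : spec_total th = 0.
    by rewrite /spec_total big1 // => i _; have := h i; case: (th i) => [t /= /eqP ->|].
  rewrite ffactn0 mul1n /spec_fact big1 // => i _; have := h i.
  by case: (th i) => [t /= /eqP <-|].
have [i hi] : exists i, ~~ fits (th i) 0.
  by apply/existsP; rewrite -negb_forall; apply/forallP.
rewrite mul0n ffact0n; suff : 0 < spec_total th by case: (spec_total th).
have : (if th i is Some t then t else 0) <= spec_total th.
  by rewrite /spec_total (bigD1 i) //= leq_addr.
move: hi; case: (th i) => [t /= ht|//].
by apply: leq_trans; rewrite lt0n eq_sym.
Qed.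

(* [th i = Some t] prescribes [t] points of colour [i], [None] leaves colour [i]
   free.  Choosing the prescribed points in order gives n^_T sequences, each
   colouring arising [spec_fact th] times; the other points get free colours. *)
Lemma ncolouringsE n th :
  ncolourings th n * spec_fact th = n ^_ (spec_total th) * spec_free th ^ (n - spec_total th).
Proof.
elim: n th => [|n IH] th; first by rewrite ncolourings0E sub0n expn0 muln1.
rewrite /ncolourings sum_ffunS (eq_bigr _ (fun v _ => ncolourings_ext n th v)) big_distrl /=.
set T := spec_total th; set Q := spec_free th.
rewrite (eq_bigr (fun v => (th v == None) * (n ^_ T * Q ^ (n - T)) +
    (if th v is Some t then t else 0) * (n ^_ T.-1 * Q ^ (n - T.-1)))); last first.
  move=> v _; case E: (th v) => [[|t]|] /=.
  - by rewrite mul0n.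
  - rewrite (spec_fact_set E) /T (spec_total_set E) /= /Q -(spec_free_set E) mulnCA IH.
    by rewrite mul0n add0n.
  - by rewrite IH mul1n mul0n addn0.
by rewrite big_split /= -!big_distrl /=; exact: ffact_expn_step.
Qed.

End PrescribedColourings.

Section ExpPoly.
Local Open Scope ring_scope.

Definition exppoly (u : nat -> rat) := exists (k : nat) (p : nat -> {poly rat}) (N : nat),
  forall n, (N <= n)%N -> u n = \sum_(i < k) (p i).[n%:R] * (i.+1)%:R ^+ n.

Lemma exppoly_eventually u v : exppoly u -> (exists N, forall n, (N <= n)%N -> u n = v n) -> exppoly v.
Proof.
move=> [k [p [N hp]]] [N' huv]; exists k, p, (maxn N N') => n hn.
by rewrite -huv ?hp //; lia.
Qed.

Lemma exppoly_eventually0 u : (exists N, forall n, (N <= n)%N -> u n = 0) -> exppoly u.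
Proof. by move=> [N h]; exists 0%N, (fun _ => 0), N => n hn; rewrite big_ord0 h. Qed.

Lemma exppolyD u v : exppoly u -> exppoly v -> exppoly (fun n => u n + v n).
Proof.
move=> [k1 [p1 [N1 h1]]] [k2 [p2 [N2 h2]]].
exists (maxn k1 k2), (fun i => (if (i < k1)%N then p1 i else 0) + (if (i < k2)%N then p2 i else 0)).
exists (maxn N1 N2).
move=> n hn; rewrite h1 ?h2; try lia.
rewrite (big_ord_widen (maxn k1 k2) (fun i => (p1 i).[n%:R] * (i.+1)%:R ^+ n)) ?leq_maxl //.
rewrite (big_ord_widen (maxn k1 k2) (fun i => (p2 i).[n%:R] * (i.+1)%:R ^+ n)) ?leq_maxr //.
rewrite !(big_mkcond (fun i : 'I_(maxn k1 k2) => (i < _)%N)) -big_split /=.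
apply: eq_bigr => i _; rewrite hornerD mulrDl.
by congr (_ + _); case: ifP; rewrite ?horner0 ?mul0r.
Qed.

Lemma exppolyZ c u : exppoly u -> exppoly (fun n => c * u n).
Proof.
move=> [k [p [N h]]]; exists k, (fun i => c *: p i), N => n hn.
by rewrite h // mulr_sumr; apply: eq_bigr => i _; rewrite hornerZ mulrA.
Qed.

Lemma exppoly_sum (I : finType) (F : I -> nat -> rat) :
  (forall i, exppoly (F i)) -> exppoly (fun n => \sum_(i : I) F i n).
Proof.
move=> hF.
suff : forall s : seq I, exppoly (fun n => \sum_(i <- s) F i n).
  by move/(_ (enum I)) => h; apply: exppoly_eventually h _; exists 0%N => n _; rewrite big_enum.
elim=> [|x s IH]; first by apply: exppoly_eventually0; exists 0%N => n _; rewrite big_nil.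
apply: exppoly_eventually (exppolyD (hF x) IH) _; exists 0%N => n _; by rewrite big_cons.
Qed.

Lemma exppoly_geom (P : {poly rat}) (q : nat) : (1 <= q)%N -> exppoly (fun n => P.[n%:R] * q%:R ^+ n).
Proof.
move=> q1; exists q, (fun i => if i == q.-1 then P else 0), 0%N => n _.
have qlt : (q.-1 < q)%N by lia.
rewrite (bigD1 (Ordinal qlt)) //= eqxx big1 ?addr0; last first.
  move=> i /eqP ni; case: ifP => [/eqP e|_]; last by rewrite horner0 mul0r.
  by exfalso; apply: ni; apply: val_inj.
by rewrite prednK //; lia.
Qed.

Definition ffact_poly (T : nat) : {poly rat} := \prod_(u < T) ('X - u%:R%:P).

Lemma ffact_polyE T n : (n ^_ T)%:R = (ffact_poly T).[n%:R] :> rat.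
Proof.
elim: T => [|T IH]; first by rewrite ffactn0 /ffact_poly big_ord0 hornerC.
rewrite /ffact_poly big_ord_recr /= hornerM -/(ffact_poly T) -IH hornerXsubC ffactnSr natrM.
case: (leqP T n) => [Tn|nT]; first by rewrite natrB.
by rewrite ffact_small // !mul0r.
Qed.

Section ColouringSums.
Variable j : nat.

Lemma spec_fact_gt0 th : (0 < spec_fact (j:=j) th)%N.
Proof.
rewrite /spec_fact; elim/big_rec: _ => // i x _ hx; rewrite muln_gt0 hx andbT.
by case: (th i) => [t|]; rewrite ?fact_gt0.
Qed.

Lemma exppoly_ncolourings th : exppoly (fun n => (ncolourings (j:=j) th n)%:R).
Proof.
set T := spec_total th; set Q := spec_free th; set P := spec_fact th.
have P0 : P%:R != 0 :> rat by rewrite pnatr_eq0 -lt0n spec_fact_gt0.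
have e n : (ncolourings th n)%:R = (n ^_ T)%:R * (Q ^ (n - T))%:R / P%:R :> rat.
  by rewrite -natrM -ncolouringsE natrM mulfK.
case: (posnP Q) => [Q0|Qp].
  apply: exppoly_eventually0; exists T.+1 => n hn.
  rewrite e Q0 exp0n ?mulr0 ?mul0r //; lia.
pose c : rat := (P%:R * Q%:R ^+ T)^-1.
apply: exppoly_eventually (exppoly_geom (c *: ffact_poly T) Qp) _; exists T => n hn.
rewrite e hornerZ -ffact_polyE /c -(subnK hn) exprD natrX subnK //.
have q0 : Q%:R ^+ T != 0 :> rat by rewrite expf_neq0 // pnatr_eq0 -lt0n.
by field; rewrite q0 P0.
Qed.

Definition trunc_spec B (b : 'I_B.+1) : option nat := if (b < B)%N then Some (b : nat) else None.

Definition trunc_weight (g : nat -> nat) B (b : 'I_B.+1) : rat :=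
  if (b < B)%N then (g b)%:R - (g B)%:R else (g B)%:R.

(* An eventually constant g is a combination of the indicators of [t = b] for
   [b < B] and of the constant [1]. *)
Lemma eventually_const_expand (g : nat -> nat) B :
  (forall t, (B <= t)%N -> g t = g B) ->
  forall t, (g t)%:R = \sum_(b : 'I_B.+1) trunc_weight g b * (fits (trunc_spec b) t)%:R :> rat.
Proof.
move=> hg t; rewrite big_ord_recr /= /trunc_weight /trunc_spec /fits /= ltnn mulr1.
case: (ltnP t B) => tB.
  rewrite (bigD1 (Ordinal tB)) //= tB eqxx mulr1 big1 ?addr0 ?subrK //.
  move=> b /eqP nb; rewrite (ltn_ord b) /=.
  case: eqP => [e|_]; last by rewrite mulr0.
  by case: nb; apply: val_inj.
rewrite big1 ?add0r ?hg // => b _; rewrite (ltn_ord b) /=.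
case: eqP => [e|_]; last by rewrite mulr0.
by move: (ltn_ord b); rewrite -e ltnNge tB.
Qed.

Lemma prod_fits (th : 'I_j -> option nat) (v : 'I_j -> nat) :
  \prod_(i < j) (fits (th i) (v i))%:R = [forall i, fits (th i) (v i)]%:R :> rat.
Proof.
case: forallP => [h|/forallP]; first by rewrite big1 // => i _; rewrite h.
rewrite negb_forall => /existsP [i /negbTE hi].
by rewrite (bigD1 i) //= hi mul0r.
Qed.

Lemma exppoly_sum_prod (g : 'I_j -> nat -> nat) (B : nat) :
  (forall i t, (B <= t)%N -> g i t = g i B) ->
  exppoly (fun n => \sum_(chi : {ffun 'I_n -> 'I_j}) \prod_(i < j) (g i (csize chi i))%:R).
Proof.
move=> hg; pose spec (th : {ffun 'I_j -> 'I_B.+1}) i := trunc_spec (th i).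
have h : exppoly (fun n => \sum_(th : {ffun 'I_j -> 'I_B.+1})
    (\prod_(i < j) trunc_weight (g i) (th i)) * (ncolourings (spec th) n)%:R).
  by apply: exppoly_sum => th; apply: exppolyZ; exact: exppoly_ncolourings.
apply: exppoly_eventually h _; exists 0 => n _.
under [RHS]eq_bigr => chi _ do under eq_bigr => i _ do rewrite (eventually_const_expand (hg i)).
under [RHS]eq_bigr => chi _ do rewrite bigA_distr_bigA /=.
rewrite [RHS]exchange_big /=; apply: eq_bigr => th _.
rewrite /ncolourings natr_sum mulr_sumr; apply: eq_bigr => chi _.
by rewrite big_split /= prod_fits.
Qed.

End ColouringSums.

End ExpPoly.

Lemma card_setE (T : finType) (b : pred T) : #|[set x | b x]| = \sum_x b x.
Proof. by rewrite -sum1_card big_mkcond; apply: eq_bigr => x _; rewrite inE; case: (b x). Qed.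

Lemma card_rel_bij (A B : finType) (PA : A -> Prop) (PB : B -> Prop) (Rl : A -> B -> Prop) :
  (forall a, PA a -> exists b, PB b /\ Rl a b) ->
  (forall b, PB b -> exists a, PA a /\ Rl a b) ->
  (forall a b b', PA a -> PB b -> PB b' -> Rl a b -> Rl a b' -> b = b') ->
  (forall a a' b, PA a -> PA a' -> PB b -> Rl a b -> Rl a' b -> a = a') ->
  #|[set a | asbool (PA a)]| = #|[set b | asbool (PB b)]|.
Proof.
move=> h1 h2 u1 u2.
case: (pickP (fun _ : B => true)) => [b0 _|B0]; last first.
  have e1 : [set a | asbool (PA a)] = set0.
    apply/setP => a; rewrite !inE; apply/negbTE/asboolP => pa.
    by have [b _] := h1 a pa; move: (B0 b).
  have e2 : [set b | asbool (PB b)] = set0 by apply/setP => b; move: (B0 b).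
  by rewrite e1 e2 !cards0.
have [f hf] : exists f : A -> B, forall a, PA a -> PB (f a) /\ Rl a (f a).
  suff : forall a, exists b, PA a -> PB b /\ Rl a b.
    by case/fin_all_exists => f hf; exists f.
  move=> a; case: (classic (PA a)) => [pa|npa]; last by exists b0.
  by have [b hb] := h1 a pa; exists b.
have -> : [set b | asbool (PB b)] = f @: [set a | asbool (PA a)].
  apply/setP => b; rewrite inE; apply/asboolP/imsetP.
    move=> pb; have [a [pa r]] := h2 b pb; exists a; first by rewrite inE; apply/asboolP.
    by have [pf rf] := hf a pa; apply: (u1 a) => //.
  by case=> a; rewrite inE => /asboolP pa ->; exact: (hf a pa).1.
rewrite card_in_imset // => a a'; rewrite !inE => /asboolP pa /asboolP pa' e.
have [pf rf] := hf a pa; have [pf' rf'] := hf a' pa'.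
by apply: (u2 a a' (f a)) => //; rewrite e.
Qed.

Lemma card_bij_ffuns (A : finType) (j : nat) :
  #|[set psi : {ffun A -> 'I_j} | asbool (injective psi /\ forall i, exists a, psi a = i)]| =
  if #|A| == j then j`! else 0.
Proof.
case: eqP => [cj|cj].
  have -> : j`! = #|{: 'I_j}| ^_ #|A| by rewrite card_ord cj ffactnn.
  rewrite -card_inj_ffuns; congr #|pred_of_set _|.
  apply/setP => psi; rewrite !inE; apply/asboolP/injectiveP => [[]//|inj]; split => // i.
  have bij : bijective psi by apply: (inj_card_bij inj); rewrite card_ord cj.
  by case: bij => g _ gK; exists (g i); rewrite gK.
apply/eqP; rewrite cards_eq0; apply/eqP/setP => psi; rewrite !inE.
apply/asboolP => -[inj sur]; apply: cj; apply/eqP; rewrite eqn_leq.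
have := leq_card _ inj; rewrite card_ord => ->.
have [g hg] := fin_all_exists sur.
have ginj : injective g by move=> a b e; rewrite -(hg a) -(hg b) e.
by have := leq_card _ ginj; rewrite card_ord.
Qed.

Section Classes.
Variable L : lang.
Variable n : nat.
Variable s : fstruct L n.
Local Notation M := (@of_fstruct L _).

Definition sim_rep (x : 'I_n) : 'I_n := [arg min_(y < x | asbool (sim (M s) x y)) (val y)].

Lemma sim_repP x : sim (M s) x (sim_rep x) /\ forall y, sim (M s) x y -> (sim_rep x <= y)%N.
Proof.
rewrite /sim_rep; case: arg_minnP => [|y /asboolP h hmin]; first by apply/asboolP; exact: sim_refl.
by split=> // z hz; apply: hmin; apply/asboolP.
Qed.

Lemma sim_rep_eq x y : sim (M s) x y -> sim_rep x = sim_rep y.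
Proof.
move=> hxy; have [hx mx] := sim_repP x; have [hy my] := sim_repP y.
apply: val_inj; apply/eqP; rewrite eqn_leq; apply/andP; split.
  by apply: mx; apply: sim_trans hxy hy.
by apply: my; apply: sim_trans (sim_sym hxy) hx.
Qed.

Definition is_sim_rep x := sim_rep x == x.
Definition sim_reps := {x : 'I_n | is_sim_rep x}.

Lemma sim_rep_is_rep x : is_sim_rep (sim_rep x).
Proof. by apply/eqP; apply: sim_rep_eq; apply: sim_sym; have [] := sim_repP x. Qed.

Definition rep_of x : sim_reps := exist _ (sim_rep x) (sim_rep_is_rep x).

Variable j : nat.

Definition sim_colouring (chi : {ffun 'I_n -> 'I_j}) :=
  (forall i, exists x, chi x = i) /\ forall x y, chi x = chi y <-> sim (M s) x y.

Lemma card_sim_colourings_bij :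
  #|[set chi | asbool (sim_colouring chi)]| =
  #|[set psi : {ffun sim_reps -> 'I_j} | asbool (injective psi /\ forall i, exists a, psi a = i)]|.
Proof.
apply: (card_rel_bij (Rl := fun (chi : {ffun 'I_n -> 'I_j}) (psi : {ffun sim_reps -> 'I_j}) =>
  forall a : sim_reps, chi (val a) = psi a)).
- move=> chi [sur cl]; exists [ffun a => chi (val a)]; split=> [|a]; last by rewrite ffunE.
  split.
    move=> a b; rewrite !ffunE => /cl h; case: a b h => [a ra] [b rb] /= h.
    by apply: val_inj => /=; rewrite -(eqP ra) -(eqP rb); apply: sim_rep_eq.
  move=> i; have [x hx] := sur i; exists (rep_of x); rewrite ffunE /= -hx.
  by apply/cl/sim_sym; have [] := sim_repP x.
- have repK (a : sim_reps) : rep_of (val a) = a by apply: val_inj; apply/eqP; exact: (valP a).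
  move=> psi [inj sur]; exists [ffun x => psi (rep_of x)]; split=> [|a]; last by rewrite ffunE repK.
  split=> [i|x y]; first by have [a ha] := sur i; exists (val a); rewrite ffunE repK.
  rewrite !ffunE; split=> [/inj /(congr1 val) /= e|/sim_rep_eq e]; last first.
    by rewrite /rep_of; congr (psi _); apply: val_inj.
  have [hx _] := sim_repP x; have [hy _] := sim_repP y.
  by apply: sim_trans hx _; rewrite e; apply: sim_sym.
- by move=> chi psi psi' _ _ _ h h'; apply/ffunP => a; rewrite -h -h'.
- move=> chi chi' psi [_ c] [_ c'] _ h h'; apply/ffunP => x.
  have [hx _] := sim_repP x.
  have e1 : chi x = chi (sim_rep x) by apply/c.
  have e2 : chi' x = chi' (sim_rep x) by apply/c'.
  by rewrite e1 e2 (h (rep_of x)) (h' (rep_of x)).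
Qed.

Lemma card_sim_colourings :
  #|[set chi | asbool (sim_colouring chi)]| = if #|{: sim_reps}| == j then j`! else 0.
Proof. by rewrite card_sim_colourings_bij card_bij_ffuns. Qed.

End Classes.

Lemma In_mem (T : eqType) (y : T) (S : seq T) : List.In y S -> y \in S.
Proof. elim: S => [//|z S IH] /= [->|h]; rewrite inE ?eqxx // IH ?orbT //. Qed.

Section Decomposition.
Variable L : lang.
Variable H : property L.
Local Notation M := (@of_fstruct L _).

Lemma card_sim_reps_le n (s : fstruct L n) K : at_most_classes (M s) K -> #|{: sim_reps s}| <= K.
Proof.
case=> S [hS cover].
have [f hf] : exists f : sim_reps s -> 'I_n, forall a, f a \in S /\ sim (M s) (val a) (f a).
  suff h : forall a : sim_reps s, exists y, y \in S /\ sim (M s) (val a) y.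
    by have [f hf] := fin_all_exists h; exists f.
  by move=> a; have [y [iy hy]] := cover (val a); exists y; split=> //; apply: In_mem.
have finj : injective f.
  move=> a b e; apply: val_inj.
  have [_ ha] := hf a; have [_ hb] := hf b.
  have hab : sim (M s) (val a) (val b) by apply: sim_trans ha _; rewrite e; apply: sim_sym.
  by rewrite -(eqP (valP a)) -(eqP (valP b)); apply: sim_rep_eq.
rewrite -(card_imset _ finj); apply: leq_trans hS.
apply: leq_trans (card_size S); apply: subset_leq_card.
by apply/subsetP => y /imsetP [a _ ->]; have [] := hf a.
Qed.

Definition ncoloured n j (chi : {ffun 'I_n -> 'I_j}) :=
  #|[set s : fstruct L n | asbool (H (M s) /\ homogeneous chi (M s) /\ separating chi s)]|.

Lemma ncoloured_sumE n j (chi : {ffun 'I_n -> 'I_j}) :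
  ([forall i, 0 < csize chi i] * ncoloured chi)%N =
  (\sum_(s : fstruct L n) (asbool (H (M s)) * asbool (sim_colouring s chi)))%N.
Proof.
rewrite /ncoloured card_setE big_distrr /=; apply: eq_bigr => s _.
case: (asboolP (H (M s))) => hs; last first.
  by rewrite mul0n; case: (asboolP (H (M s) /\ _)) => [[]|]; rewrite ?muln0.
rewrite mul1n; case: (asboolP (sim_colouring s chi)) => [[sur cl]|nsim].
  have -> : [forall i, 0 < csize chi i].
    by apply/forallP => i; have [x hx] := sur i; apply/card_gt0P; exists x; rewrite inE hx.
  by case: (asboolP (H (M s) /\ _)) => // -[]; split=> //; split=> x y /cl.
case: (asboolP (H (M s) /\ _)) => [[_ [hom sep]]|]; last by rewrite muln0.
case: forallP => [sur|//]; case: nsim; split.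
  by move=> i; have /card_gt0P [x] := sur i; rewrite inE => /eqP; exists x.
by move=> x y; split=> [/hom|/sep].
Qed.

Local Open Scope ring_scope.

Lemma sum_card_sim_colourings n (s : fstruct L n) K : (#|{: sim_reps s}| <= K)%N ->
  \sum_(j < K.+1) (j`!%:R)^-1 *
    #|[set chi : {ffun 'I_n -> 'I_j} | asbool (sim_colouring s chi)]|%:R = 1 :> rat.
Proof.
move=> hc.
have hc' : (#|{: sim_reps s}| < K.+1)%N by [].
have f0 : (#|{: sim_reps s}|`!%:R : rat) != 0 by rewrite pnatr_eq0 -lt0n fact_gt0.
rewrite (bigD1 (Ordinal hc')) //= card_sim_colourings eqxx mulVf //.
rewrite big1 ?addr0 // => i /eqP ni; rewrite card_sim_colourings; case: eqP => e; last by rewrite mulr0.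
by exfalso; apply: ni; apply: val_inj.
Qed.

(* A structure with c classes has exactly c! colourings by its ~-classes,
   whence the weights 1/j!. *)
Lemma HcardE K : (forall T (M0 : struct L T), H M0 -> at_most_classes M0 K) -> forall n,
  (Hcard H n)%:R = \sum_(j < K.+1) (j`!%:R)^-1 *
     \sum_(chi : {ffun 'I_n -> 'I_j}) ([forall i, 0 < csize chi i]%N * ncoloured chi)%:R :> rat.
Proof.
move=> hb n.
have regroup j : (j`!%:R)^-1 *
    \sum_(chi : {ffun 'I_n -> 'I_j}) ([forall i, 0 < csize chi i]%N * ncoloured chi)%:R
  = \sum_(s : fstruct L n) (asbool (H (M s)))%:R *
      ((j`!%:R)^-1 * #|[set chi : {ffun 'I_n -> 'I_j} | asbool (sim_colouring s chi)]|%:R) :> rat.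
  under eq_bigr => chi _ do rewrite ncoloured_sumE natr_sum.
  rewrite exchange_big mulr_sumr; apply: eq_bigr => s _.
  rewrite card_setE natr_sum !mulr_sumr; apply: eq_bigr => chi _.
  by rewrite natrM mulrCA.
under eq_bigr => j _ do rewrite regroup.
rewrite exchange_big /Hcard card_setE natr_sum; apply: eq_bigr => s _.
rewrite -mulr_sumr; case: (asboolP (H (M s))) => hs; last by rewrite mul0r.
by rewrite mul1r (sum_card_sim_colourings (card_sim_reps_le (hb _ _ hs))).
Qed.

End Decomposition.

Lemma ex_uniform_bound (I : finType) (P : I -> nat -> Prop) :
  (forall i B B', B <= B' -> P i B -> P i B') -> (forall i, exists B, P i B) ->
  exists B, forall i, P i B.
Proof.
move=> mono ex; have [f hf] := fin_all_exists ex.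
exists (\max_i f i) => i; apply: mono (hf i); exact: (leq_bigmax (F := f)).
Qed.

Section Templates.
Variable L : lang.
Variable H : property L.
Variable hH : hereditary H.
Variable j : nat.
Local Notation M := (@of_fstruct L _).
Local Notation B0 := (cap_bound L).

(* Existence is read off the counting formula [ncolouringsE]. *)
Lemma ex_colouring_csize (m : 'I_j -> nat) :
  exists p : {n : nat & {ffun 'I_n -> 'I_j}}, forall i, csize (tagged p) i = m i.
Proof.
pose th := fun i : 'I_j => Some (m i).
have := ncolouringsE (spec_total th) th.
have Q0 : spec_free th = 0 by rewrite /spec_free big1.
rewrite Q0 subnn expn0 muln1 ffactnn => e.
have : 0 < ncolourings th (spec_total th).
  by rewrite lt0n; apply/eqP => h; move: e; rewrite h mul0n => /esym/eqP; rewrite eqn0Ngt fact_gt0.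
rewrite /ncolourings lt0n => /eqP h; apply: NNPP => hn; apply: h; apply: big1 => chi _.
apply/eqP; rewrite eqb0; apply/forallP => hall; apply: hn.
by exists (Tagged (fun n => {ffun 'I_n -> 'I_j}) chi) => i /=; apply/eqP; exact: hall i.
Qed.

Definition template (m : 'I_j -> nat) : {n : nat & {ffun 'I_n -> 'I_j}} :=
  proj1_sig (constructive_indefinite_description _ (ex_colouring_csize m)).
Definition tsize m := tag (template m).
Definition tcol m : {ffun 'I_(tsize m) -> 'I_j} := tagged (template m).
Lemma csize_tcol m i : csize (tcol m) i = m i.
Proof. exact: (proj2_sig (constructive_indefinite_description _ (ex_colouring_csize m))). Qed.

Definition uncap (sg u : 'I_j -> nat) := fun i => if sg i == B0 then B0 + u i else sg i.

(* [sg] is a class-size vector capped at [B0], [u] the overflow of the classes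
   of size [B0]: [u] is extendable when some member of H with class sizes
   [uncap sg u] corresponds to the template [tau]. *)
Definition extendable (sg : 'I_j -> nat) (tau : fstruct L (tsize sg)) (u : 'I_j -> nat) : Prop :=
  homogeneous (tcol sg) (M tau) /\
  exists n (chi : {ffun 'I_n -> 'I_j}) (s : fstruct L n),
    [/\ forall i, csize chi i = uncap sg u i, homogeneous chi (M s),
        corresp chi (tcol sg) s tau & H (M s)].

Lemma cap_uncap (sg u : 'I_j -> nat) (i : 'I_j) : sg i <= B0 -> minn (uncap sg u i) B0 = sg i.
Proof. rewrite /uncap; case: eqP => [->|/eqP ne] h; lia. Qed.

Lemma extendable_downset (sg : 'I_j -> nat) (tau : fstruct L (tsize sg)) :
  (forall i, sg i <= B0) -> downset (extendable tau).
Proof.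
move=> hs u v huv [homt [n' [chi' [s' [sz' hom' cr' Hs']]]]]; split => //.
have [[n chi] /= hchi] := ex_colouring_csize (uncap sg u).
have ce : cap_eq L chi (tcol sg).
  by move=> i; rewrite /= hchi csize_tcol cap_uncap //; have := hs i; lia.
have [s [homs crs]] := corresp_exists (cap_eq_sym ce) homt.
have crs' := corresp_sym crs.
exists n, chi, s; split => //.
apply: (corresp_hereditary hH (chi := chi) (s := s) (chi' := chi') (s' := s')) => //.
- by move=> i; rewrite /= hchi sz' /uncap; case: ifP => _ //; rewrite leq_add2l.
- exact: corresp_trans ce crs' cr'.
Qed.

End Templates.

Section CapDeterminacy.
Variable L : lang.
Variable H : property L.
Variable hH : hereditary H.
Variable j : nat.
Local Notation M := (@of_fstruct L _).
Local Notation B0 := (cap_bound L).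

Definition cap_determined (P : ('I_j -> nat) -> Prop) B := forall u, P u <-> P (capv B u).

Lemma cap_determined_mono P B B' : B <= B' -> cap_determined P B -> cap_determined P B'.
Proof.
move=> le h u.
have e : capv B (capv B' u) = capv B u by apply: functional_extensionality => i; rewrite /capv; lia.
have := h u; have := h (capv B' u); rewrite e; tauto.
Qed.

Definition ordv (f : {ffun 'I_j -> 'I_B0.+1}) : 'I_j -> nat := fun i => f i.

Lemma uniform_cap_determined :
  exists B1, forall (f : {ffun 'I_j -> 'I_B0.+1}) (tau : fstruct L (tsize (ordv f))),
  cap_determined (@extendable L H j (ordv f) tau) B1.
Proof.
apply: (ex_uniform_bound (P := fun f B =>
  forall tau : fstruct L (tsize (ordv f)), cap_determined (@extendable L H j (ordv f) tau) B)).
  by move=> f B B' le h tau; apply: cap_determined_mono le (h tau).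
move=> f.
apply: (ex_uniform_bound (P := fun (tau : fstruct L (tsize (ordv f))) B =>
  cap_determined (@extendable L H j (ordv f) tau) B)).
  by move=> tau B B' le h; apply: cap_determined_mono le h.
move=> tau; apply: downset_capped; apply: extendable_downset => // i.
by rewrite /ordv -ltnS ltn_ord.
Qed.

Definition ntemplates (sg : 'I_j -> nat) (u : 'I_j -> nat) : nat :=
  \sum_(tau : fstruct L (tsize sg))
     asbool (homogeneous (tcol sg) (M tau) /\ separating (tcol sg) tau /\ @extendable L H j sg tau u).
Definition ncoloured_by_size (v : 'I_j -> nat) := ntemplates (capv B0 v) (fun i => v i - B0).

Lemma uncap_cap (v : 'I_j -> nat) i : uncap L (capv B0 v) (fun i => v i - B0) i = v i.
Proof. rewrite /uncap /capv; case: eqP => h; lia. Qed.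

Lemma ncolouredE n (chi : {ffun 'I_n -> 'I_j}) :
  ncoloured H chi = ncoloured_by_size (fun i => csize chi i).
Proof.
rewrite /ncoloured_by_size /ntemplates -card_setE /ncoloured.
set v := fun i => csize chi i.
set sg := capv B0 v.
have ce : cap_eq L chi (tcol sg).
  by move=> i; rewrite csize_tcol /sg /capv /v; lia.
apply: (card_rel_bij (Rl := fun (s : fstruct L n) (tau : fstruct L (tsize sg)) =>
  corresp chi (tcol sg) s tau)).
- move=> s [Hs [homs seps]].
  have [tau [homt cr]] := corresp_exists ce homs.
  exists tau; split => //; split => //; split; first exact: corresp_separating ce homt cr seps.
  split => //; exists n, chi, s; split => // i.
  by rewrite uncap_cap.
- move=> tau [homt [sept [_ [n0 [chi0 [s0 [sz0 hom0 cr0 H0]]]]]]].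
  have [s [homs cr]] := corresp_exists (cap_eq_sym ce) homt.
  have cr' := corresp_sym cr.
  exists s; split => //; split; last first.
    by split => //; exact: corresp_separating (cap_eq_sym ce) homs cr sept.
  apply: (corresp_hereditary hH (chi := chi) (s := s) (chi' := chi0) (s' := s0)) => //.
  - by move=> i; rewrite sz0 uncap_cap.
  - exact: corresp_trans ce cr' cr0.
- move=> s tau tau' [_ [homs _]] [homt _] [homt' _] cr cr'.
  exact: corresp_unique ce homt homt' cr cr'.
- move=> s s' tau [_ [homs _]] [_ [homs' _]] [homt _] cr cr'.
  exact: corresp_unique (cap_eq_sym ce) homs homs' (corresp_sym cr) (corresp_sym cr').
Qed.

Lemma ncoloured_by_size_cap :
  exists C, B0 <= C /\ forall v, ncoloured_by_size v = ncoloured_by_size (capv C v).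
Proof.
have [B1 hB1] := uniform_cap_determined.
exists (B0 + B1); split; first exact: leq_addr.
move=> v; rewrite /ncoloured_by_size.
have e1 : capv B0 (capv (B0 + B1) v) = capv B0 v.
  by apply: functional_extensionality => i; rewrite /capv; lia.
rewrite e1.
pose f : {ffun 'I_j -> 'I_B0.+1} := [ffun i => inord (minn (v i) B0)].
have e2 : capv B0 v = ordv f.
  apply: functional_extensionality => i; rewrite /ordv /f ffunE inordK //.
  by rewrite ltnS geq_minr.
rewrite e2 /ntemplates; apply: eq_bigr => tau _; congr (nat_of_bool _); apply: asbool_iff.
have h := hB1 f tau.
have e3 : capv B1 (fun i => v i - B0) = capv B1 (fun i => capv (B0 + B1) v i - B0).
  by apply: functional_extensionality => i; rewrite /capv; lia.
have := h (fun i => v i - B0); have := h (fun i => capv (B0 + B1) v i - B0).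
rewrite -e3; tauto.
Qed.

End CapDeterminacy.

Section CappedSums.
Local Open Scope ring_scope.

Lemma capv_expand j (Psi : ('I_j -> nat) -> rat) C (v : 'I_j -> nat) :
  Psi (capv C v) =
  \sum_(f : {ffun 'I_j -> 'I_C.+1}) Psi (fun i => f i) * \prod_(i < j) (minn (v i) C == f i)%:R.
Proof.
pose f0 : {ffun 'I_j -> 'I_C.+1} := [ffun i => inord (minn (v i) C)].
have vf0 i : nat_of_ord (f0 i) = minn (v i) C by rewrite ffunE inordK // ltnS geq_minr.
rewrite (bigD1 f0) //= [X in _ + X]big1.
  rewrite addr0 big1 ?mulr1; first by congr Psi; apply: functional_extensionality => i; rewrite vf0.
  by move=> i _; rewrite vf0 eqxx.
move=> f /eqP nf; have [i hi] : exists i, f i != f0 i.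
  by apply: NNPP => h; apply: nf; apply/ffunP => i; apply/eqP/negPn/negP => hn; apply: h; exists i.
rewrite (bigD1 i) //= -vf0 (_ : (f0 i == f i :> nat) = false) ?mul0r ?mulr0 //.
by apply/negbTE; apply: contra hi => /eqP e; apply/eqP; apply: val_inj.
Qed.

Lemma exppoly_sum_capped j (Psi : ('I_j -> nat) -> rat) C :
  exppoly (fun n => \sum_(chi : {ffun 'I_n -> 'I_j}) Psi (capv C (fun i => csize chi i))).
Proof.
have hf (f : {ffun 'I_j -> 'I_C.+1}) : exppoly (fun n => Psi (fun i => f i) *
    \sum_(chi : {ffun 'I_n -> 'I_j}) \prod_(i < j) (minn (csize chi i) C == f i)%:R).
  apply: exppolyZ.
  apply: (exppoly_sum_prod (g := fun i t => (minn t C == f i) : nat) (B := C)) => i t ht.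
  by rewrite /= minnn (minn_idPr ht).
apply: exppoly_eventually (exppoly_sum hf) _; exists 0%N => n _.
under [RHS]eq_bigr => chi _ do rewrite capv_expand.
by rewrite [RHS]exchange_big; apply: eq_bigr => f _; rewrite mulr_sumr.
Qed.

End CappedSums.

Local Open Scope ring_scope.

Lemma exppoly_ncoloured (L : lang) (H : property L) (j : nat) : hereditary H ->
  exppoly (fun n => \sum_(chi : {ffun 'I_n -> 'I_j})
                      ([forall i, 0 < csize chi i]%N * ncoloured H chi)%:R).
Proof.
move=> hH; have [C [hC hG]] := ncoloured_by_size_cap hH j.
pose Psi (v : 'I_j -> nat) : rat := ([forall i, 0 < v i]%N * ncoloured_by_size H v)%:R.
apply: exppoly_eventually (exppoly_sum_capped Psi C) _; exists 0%N => n _; apply: eq_bigr => chi _.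
rewrite /Psi -hG -(ncolouredE hH); congr ((_ * _)%:R); congr (nat_of_bool _).
apply: eq_forallb => i; rewrite /capv.
have : (2 <= cap_bound L)%N by rewrite /cap_bound; lia.
lia.
Qed.

Theorem mainTheorem4 (L : lang) (H : property L) :
  hereditary H -> basic H -> ~ trivial H ->
  exists (k : nat) (p : 'I_k -> {poly rat}) (N : nat),
    forall n : nat, (N <= n)%N ->
      (Hcard H n)%:R = \sum_(i < k) (p i).[n%:R] * ((i.+1)%:R ^+ n).
Proof.
move=> hH [K hK] _.
have summands (j : 'I_K.+1) : exppoly (fun n => (j`!%:R)^-1 *
    \sum_(chi : {ffun 'I_n -> 'I_j}) ([forall i, 0 < csize chi i]%N * ncoloured H chi)%:R).
  by apply: exppolyZ; apply: exppoly_ncoloured.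
have [k [p [N hp]]] : exppoly (fun n => (Hcard H n)%:R).
  by apply: exppoly_eventually (exppoly_sum summands) _; exists 0%N => n _; rewrite (HcardE hK).
by exists k, (fun i : 'I_k => p i), N.
Qed.
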